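(* Let $N\ge 3$ and define, for a function $V$ of $s>0$, $$\mathcal{L}V:=(5-N)V_s s^2+\tfrac12 V_s-V_sVs^2-2(N-2)Vs+(N-2)V^2s.$$ For every $m>0$ there exists $L_m>0$ such that the problem $\mathcal{L}\tilde V=0$ for $s>0$, $\tilde V(0)=m$, admits a unique classical solution $\tilde V\in C^2([0,L_m])$, and this solution satisfies $\tilde V_s(0)=0$ and $(2-m)\tilde V_{ss}(s)\ge (N-2)m(2-m)^2$ for $s\in[0,L_m]$. *)

From Stdlib Require Import Reals.
Open Scope R_scope.

Definition has_deriv_on (a b : R) (f f' : R -> R) : Prop :=
  forall x, a <= x <= b ->
  forall eps, 0 < eps -> exists delta, 0 < delta /\
    forall y, a <= y <= b -> y <> x -> Rabs (y - x) < delta ->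
      Rabs ((f y - f x) / (y - x) - f' x) < eps.

Definition cont_on (a b : R) (g : R -> R) : Prop :=
  forall x, a <= x <= b ->
  forall eps, 0 < eps -> exists delta, 0 < delta /\
    forall y, a <= y <= b -> Rabs (y - x) < delta -> Rabs (g y - g x) < eps.

Definition C2_on (a b : R) (V V1 V2 : R -> R) : Prop :=
  has_deriv_on a b V V1 /\ has_deriv_on a b V1 V2 /\ cont_on a b V2.

Definition Lop (N : nat) (s v vs : R) : R :=
  (5 - INR N) * vs * s ^ 2 + / 2 * vs - vs * v * s ^ 2
  - 2 * (INR N - 2) * v * s + (INR N - 2) * v ^ 2 * s.

Definition is_solution (N : nat) (m L : R) (V V1 V2 : R -> R) : Prop :=
  C2_on 0 L V V1 V2 /\ V 0 = m /\
  forall s, 0 < s <= L -> Lop N s (V s) (V1 s) = 0.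

From Stdlib Require Import Reals Lra Lia Ranalysis5 ClassicalEpsilon.
From Coquelicot Require Import Coquelicot.
Open Scope R_scope.

(* Write k = N - 2.  Then L V = V_s D - k s V (2 - V) with D = 1/2 + (3 - k - V) s^2, so near
   s = 0 the problem is the regular equation V_s = k s V (2 - V) / D.

   Existence (for m = 2 the solution is constant): in the variable y = s^2 the inverse function
   y(V) solves the linear equation dy/dV = a(V) y + b(V), which variation of constants
   integrates explicitly with y(m) = 0.  As y'(m) = b(m) <> 0, it can be inverted near V = m,
   and V(s) = y^-1(s^2).

   Uniqueness on [0, L] with N L^2 <= 1/4: along any solution D cannot vanish, since a zero of
   D at s > 0 forces V (2 - V) = 0, where D > 0.  So D > 0, the difference e of two solutions
   satisfies e' = lam e with lam continuous on [0, L], and a Gronwall argument gives e = 0.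

   Finally V_ss(0) = 2 k m (2 - m), so (2 - m) V_ss >= k m (2 - m)^2 near 0 by continuity. *)

Lemma has_deriv_on_of_derivable a b f f' :
  (forall x, a <= x <= b -> derivable_pt_lim f x (f' x)) -> has_deriv_on a b f f'.
Proof.
  intros Hf x Hx eps Heps. destruct (Hf x Hx eps Heps) as [d Hd].
  exists d; split; [apply cond_pos|]. intros y _ Hyx Hyd.
  specialize (Hd (y - x)). replace (x + (y - x)) with y in Hd by ring.
  apply Hd; [lra | exact Hyd].
Qed.

Lemma cont_on_of_continuity a b g :
  (forall x, a <= x <= b -> continuity_pt g x) -> cont_on a b g.
Proof.
  intros Hg x Hx eps Heps. destruct (Hg x Hx eps Heps) as [d [Hd Hgd]].
  exists d; split; [exact Hd|]. intros y _ Hyd.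
  destruct (Req_dec y x) as [-> | Hne].
  - rewrite Rminus_eq_0, Rabs_R0; exact Heps.
  - apply (Hgd y). split; [split; [exact I | auto] | exact Hyd].
Qed.

Lemma has_deriv_on_cont_on a b f f' : has_deriv_on a b f f' -> cont_on a b f.
Proof.
  intros Hf x Hx eps Heps.
  destruct (Hf x Hx 1 Rlt_0_1) as [d [Hd Hq]].
  set (M := 1 + Rabs (f' x)).
  assert (HM : 0 < M) by (unfold M; pose proof (Rabs_pos (f' x)); lra).
  exists (Rmin d (eps / M)); split.
  { apply Rmin_pos; [lra | apply Rdiv_lt_0_compat; lra]. }
  intros y Hy Hyx.
  destruct (Req_dec y x) as [-> | Hne].
  { rewrite Rminus_eq_0, Rabs_R0; exact Heps. }
  pose proof (Rmin_l d (eps / M)); pose proof (Rmin_r d (eps / M)).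
  specialize (Hq y Hy Hne ltac:(lra)).
  assert (Hslope : Rabs ((f y - f x) / (y - x)) < M).
  { pose proof (Rabs_triang ((f y - f x) / (y - x) - f' x) (f' x)) as Htri.
    replace ((f y - f x) / (y - x) - f' x + f' x) with ((f y - f x) / (y - x)) in Htri by ring.
    unfold M; lra. }
  replace (f y - f x) with ((f y - f x) / (y - x) * (y - x)) by (field; lra).
  rewrite Rabs_mult.
  apply Rle_lt_trans with (M * Rabs (y - x)).
  { apply Rmult_le_compat_r; [apply Rabs_pos | lra]. }
  replace eps with (M * (eps / M)) by (field; lra).
  apply Rmult_lt_compat_l; lra.
Qed.

(* Extending a function on [a, b] by its end values makes Stdlib's two-sided continuity
   theorems (IVT, extreme values) available for [cont_on] and [has_deriv_on]. *)
Definition clamp (a b x : R) := Rmax a (Rmin b x).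

Lemma clamp_in a b x : a <= b -> a <= clamp a b x <= b.
Proof. intros; unfold clamp, Rmax, Rmin; repeat destruct Rle_dec; lra. Qed.

Lemma clamp_id a b x : a <= x <= b -> clamp a b x = x.
Proof. intros; unfold clamp, Rmax, Rmin; repeat destruct Rle_dec; lra. Qed.

Lemma clamp_dist_le a b x y : a <= b -> Rabs (clamp a b y - clamp a b x) <= Rabs (y - x).
Proof.
  intros; unfold clamp, Rmax, Rmin; repeat destruct Rle_dec;
    unfold Rabs; repeat destruct Rcase_abs; lra.
Qed.

Lemma continuity_clamp a b g : a <= b -> cont_on a b g -> continuity (fun x => g (clamp a b x)).
Proof.
  intros Hab Hg x eps Heps.
  destruct (Hg _ (clamp_in a b x Hab) eps Heps) as [d [Hd Hgd]].
  exists d; split; [exact Hd|]. intros y [_ Hy]; simpl in *; unfold R_dist in *.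
  apply Hgd; [apply clamp_in, Hab|].
  eapply Rle_lt_trans; [apply clamp_dist_le, Hab | exact Hy].
Qed.

Lemma derivable_pt_lim_clamp a b f f' x : has_deriv_on a b f f' -> a < x < b ->
  derivable_pt_lim (fun y => f (clamp a b y)) x (f' x).
Proof.
  intros Hf Hx eps Heps.
  destruct (Hf x ltac:(lra) eps Heps) as [d [Hd Hfd]].
  set (d' := Rmin d (Rmin (x - a) (b - x))).
  assert (Hd' : 0 < d') by (apply Rmin_pos; [lra | apply Rmin_pos; lra]).
  exists (mkposreal d' Hd'). intros h Hh Hhd; simpl in Hhd.
  pose proof (Rmin_l d (Rmin (x - a) (b - x))); pose proof (Rmin_r d (Rmin (x - a) (b - x))).
  pose proof (Rmin_l (x - a) (b - x)); pose proof (Rmin_r (x - a) (b - x)).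
  assert (Hxh : a <= x + h <= b) by (unfold d', Rabs in *; destruct Rcase_abs; lra).
  rewrite (clamp_id a b x), (clamp_id a b (x + h)) by lra.
  specialize (Hfd (x + h) Hxh). replace (x + h - x) with h in Hfd by ring.
  apply Hfd; [lra | unfold d' in *; lra].
Qed.

Lemma continuity_pt_pos_near f x : continuity_pt f x -> 0 < f x ->
  exists d, 0 < d /\ forall t, Rabs (t - x) < d -> 0 < f t.
Proof.
  intros Hf Hpos. destruct (Hf (f x / 2) ltac:(lra)) as [d [Hd Hfd]].
  exists d; split; [exact Hd|]. intros t Ht.
  destruct (Req_dec t x) as [-> | Hne]; [exact Hpos|].
  assert (Habs : Rabs (f t - f x) < f x / 2).
  { apply Hfd. split; [split; [exact I | auto] | exact Ht]. }
  apply Rabs_def2 in Habs; lra.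
Qed.

Lemma pos_of_nonvanishing (g : R -> R) L : continuity g -> 0 < g 0 ->
  (forall s, 0 < s <= L -> g s <> 0) -> forall s, 0 <= s <= L -> 0 < g s.
Proof.
  intros Hg Hg0 Hnz s Hs.
  destruct (Req_dec s 0) as [-> | Hs0]; [exact Hg0|].
  destruct (Rlt_le_dec 0 (g s)) as [Hp | Hn]; [exact Hp|]. exfalso.
  assert (Hneg : g s < 0) by (destruct Hn; [lra | exfalso; apply (Hnz s); lra]).
  assert (Hopp : continuity (fun x => - g x)) by reg.
  destruct (IVT _ 0 s Hopp ltac:(lra) ltac:(lra) ltac:(lra)) as [z [Hz Hgz]].
  destruct (Req_dec z 0) as [-> | Hz0]; [lra|].
  apply (Hnz z); lra.
Qed.

Lemma linear_ode_zero (e lam : R -> R) L K :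
  (forall x, 0 <= x <= L -> continuity_pt e x) ->
  (forall x, 0 < x < L -> derivable_pt_lim e x (lam x * e x)) ->
  (forall x, 0 <= x <= L -> lam x <= K) -> e 0 = 0 ->
  forall s, 0 <= s <= L -> e s = 0.
Proof.
  intros He He' Hlam He0 s Hs.
  destruct (Req_dec s 0) as [-> | Hs0]; [exact He0|].
  set (h := fun x => e x ^ 2 * exp (- (2 * K * x))).
  set (dh := fun x => 2 * e x ^ 2 * exp (- (2 * K * x)) * (lam x - K)).
  destruct (MVT_gen h 0 s dh) as [c [Hc Hmvt]]; rewrite Rmin_left, Rmax_right in * by lra.
  - intros x Hx.
    assert (Hex : is_derive e x (lam x * e x)) by (apply is_derive_Reals, He'; lra).
    unfold h, dh. auto_derive.
    + exists (lam x * e x); exact Hex.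
    + replace (Derive (fun y => e y) x) with (lam x * e x)
        by (symmetry; apply is_derive_unique; exact Hex).
      ring.
  - intros x Hx. assert (continuity_pt e x) by (apply He; lra). unfold h. reg.
  - assert (Hdh : dh c <= 0).
    { unfold dh. pose proof (exp_pos (- (2 * K * c))). pose proof (Hlam c ltac:(lra)).
      assert (0 <= e c ^ 2 * exp (- (2 * K * c))) by (apply Rmult_le_pos; [apply pow2_ge_0 | lra]).
      nra. }
    assert (Hhs : h s <= 0) by (unfold h in Hmvt at 2; rewrite He0 in Hmvt; nra).
    unfold h in Hhs. pose proof (exp_pos (- (2 * K * s))). pose proof (pow2_ge_0 (e s)).
    assert (Hsq : e s * e s = 0) by nra.
    now destruct (Rmult_integral _ _ Hsq).
Qed.

Lemma increasing_of_deriv_pos (phi dphi : R -> R) a b :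
  (forall t, a <= t <= b -> derivable_pt_lim phi t (dphi t)) ->
  (forall t, a <= t <= b -> 0 < dphi t) ->
  forall x y, a <= x -> x < y -> y <= b -> phi x < phi y.
Proof.
  intros Hder Hpos x y Hx Hxy Hy.
  apply (incr_function_le phi a b dphi); simpl; auto.
  - intros z Hz1 Hz2. apply is_derive_Reals, Hder; lra.
  - intros z Hz1 Hz2. apply Hpos; lra.
Qed.

Lemma inverse_of_increasing (phi : R -> R) a b : a < b ->
  (forall x, a <= x <= b -> continuity_pt phi x) ->
  (forall x y, a <= x -> x < y -> y <= b -> phi x < phi y) ->
  exists g : R -> R,
    (forall t, a <= t <= b -> g (phi t) = t) /\
    forall y, phi a <= y <= phi b -> a <= g y <= b /\ phi (g y) = y.
Proof.
  intros Hab Hcont Hincr.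
  assert (Hphi : forall t, a <= t <= b -> phi a <= phi t <= phi b).
  { intros t [Hat Htb]; split.
    - destruct Hat as [Hat | <-]; [left; apply Hincr; lra | right; reflexivity].
    - destruct Htb as [Htb | ->]; [left; apply Hincr; lra | right; reflexivity]. }
  assert (Hinj : forall x y, a <= x <= b -> a <= y <= b -> phi x = phi y -> x = y).
  { intros x y Hx Hy E. destruct (Rtotal_order x y) as [Hl | [Hl | Hl]]; auto.
    - pose proof (Hincr x y ltac:(lra) Hl ltac:(lra)); lra.
    - pose proof (Hincr y x ltac:(lra) Hl ltac:(lra)); lra. }
  set (g := fun y => epsilon (inhabits a) (fun t => a <= t <= b /\ phi t = y)).
  assert (Hg : forall y, phi a <= y <= phi b -> a <= g y <= b /\ phi (g y) = y).
  { intros y Hy. apply (epsilon_spec (inhabits a) (fun t => a <= t <= b /\ phi t = y)).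
    destruct (f_interv_is_interv phi a b y Hab Hy Hcont) as [x Hx]. exists x; exact Hx. }
  exists g; split; [| exact Hg].
  intros t Ht. destruct (Hg (phi t) (Hphi t Ht)) as [Hgt Hpgt]. apply Hinj; auto.
Qed.

Lemma local_inverse (phi dphi : R -> R) a b : a < b ->
  (forall t, a <= t <= b -> derivable_pt_lim phi t (dphi t)) ->
  (forall t, a <= t <= b -> 0 < dphi t) ->
  exists g : R -> R,
    (forall t, a <= t <= b -> g (phi t) = t) /\
    forall y, phi a < y < phi b ->
      a <= g y <= b /\ phi (g y) = y /\ derivable_pt_lim g y (/ dphi (g y)).
Proof.
  intros Hab Hder Hpos.
  pose proof (increasing_of_deriv_pos phi dphi a b Hder Hpos) as Hincr.
  assert (Hcont : forall x, a <= x <= b -> continuity_pt phi x)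
    by (intros x Hx; apply derivable_continuous_pt; exists (dphi x); apply Hder, Hx).
  destruct (inverse_of_increasing phi a b Hab Hcont Hincr) as [g [Hgphi Hg]].
  exists g; split; [exact Hgphi|].
  intros y Hy. destruct (Hg y ltac:(lra)) as [Hgy Hpgy].
  split; [exact Hgy|]. split; [exact Hpgy|].
  assert (Hcg : continuity_pt g y).
  { apply (continuity_pt_recip_interv phi g a b Hab Hincr).
    - intros x Hx1 Hx2. apply (proj2 (Hg x ltac:(lra))).
    - intros x Hx1 Hx2. apply (proj1 (Hg x ltac:(lra))).
    - exact Hcont.
    - exact Hy. }
  assert (Hga : g (phi a) = a) by (apply Hgphi; lra).
  assert (Hgb : g (phi b) = b) by (apply Hgphi; lra).
  assert (Prf : forall t, g (phi a) <= t <= g (phi b) -> derivable_pt phi t).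
  { intros t Ht. exists (dphi t). apply Hder. rewrite Hga, Hgb in Ht; exact Ht. }
  assert (Hgy' : g (phi a) <= g y <= g (phi b)) by (rewrite Hga, Hgb; exact Hgy).
  pose proof (derivable_pt_lim_recip_interv phi g (phi a) (phi b) y Prf Hcg ltac:(lra) Hy Hgy')
    as Hrec.
  rewrite (derive_pt_eq_0 phi (g y) (dphi (g y)) (Prf (g y) Hgy') (Hder (g y) Hgy)) in Hrec.
  replace (/ dphi (g y)) with (1 / dphi (g y)) by (unfold Rdiv; ring).
  apply Hrec.
  - intros x Hx. apply (proj2 (Hg x ltac:(lra))).
  - apply Rgt_not_eq, Hpos, Hgy.
Qed.

Lemma Rabs_sign_mult sg t : sg = 1 \/ sg = -1 -> Rabs (sg * t) = Rabs t.
Proof.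
  intros Hsg. rewrite Rabs_mult. destruct Hsg as [-> | ->];
    unfold Rabs at 1; destruct Rcase_abs; lra.
Qed.

Lemma increasing_reflection (U dU : R -> R) m r : 0 < r ->
  (forall v, Rabs (v - m) < r -> is_derive U v (dU v)) ->
  continuity_pt dU m -> dU m <> 0 ->
  exists sg d, (sg = 1 \/ sg = -1) /\ 0 < d < r /\
    forall t, -d <= t <= d ->
      derivable_pt_lim (fun t => U (m + sg * t)) t (sg * dU (m + sg * t)) /\
      0 < sg * dU (m + sg * t).
Proof.
  intros Hr HU HdU Hnz.
  assert (Hsg : exists sg, (sg = 1 \/ sg = -1) /\ 0 < sg * dU m).
  { destruct (Rlt_or_le 0 (dU m)); [exists 1 | exists (-1)]; split; lra. }
  destruct Hsg as [sg [Hsg Hsg0]].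
  assert (Hc : continuity_pt (fun t => sg * dU (m + sg * t)) 0).
  { assert (Hc : continuity_pt (fun t => dU (m + sg * t)) 0).
    { apply (continuity_pt_comp (fun t => m + sg * t) dU 0); [reg|].
      now rewrite Rmult_0_r, Rplus_0_r. }
    exact (continuity_pt_scal _ sg 0 Hc). }
  destruct (continuity_pt_pos_near _ 0 Hc ltac:(cbv beta; rewrite Rmult_0_r, Rplus_0_r; lra))
    as [d0 [Hd0 Hpos]].
  exists sg, (Rmin d0 r / 2).
  pose proof (Rmin_l d0 r); pose proof (Rmin_r d0 r); pose proof (Rmin_pos d0 r Hd0 Hr).
  split; [exact Hsg | split; [lra |]].
  intros t Ht.
  assert (Hsmall : Rabs t < d0 /\ Rabs t < r) by (unfold Rabs; destruct Rcase_abs; lra).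
  split.
  - apply is_derive_Reals, (is_derive_comp U (fun t => m + sg * t)).
    + apply HU. replace (m + sg * t - m) with (sg * t) by ring.
      rewrite Rabs_sign_mult by exact Hsg. apply Hsmall.
    + auto_derive; [exact I | ring].
  - apply Hpos. rewrite Rminus_0_r. apply Hsmall.
Qed.

Lemma solve_by_inversion (U dU : R -> R) m r : 0 < r ->
  (forall v, Rabs (v - m) < r -> is_derive U v (dU v)) ->
  continuity_pt dU m -> dU m <> 0 -> U m = 0 ->
  exists Y, 0 < Y /\ exists V : R -> R, V 0 = m /\
    forall s, -Y < s < Y ->
      Rabs (V s - m) < r /\ U (V s) = s ^ 2 /\ dU (V s) <> 0 /\
      is_derive V s (2 * s / dU (V s)).
Proof.
  intros Hr HU HdU Hnz HU0.
  destruct (increasing_reflection U dU m r Hr HU HdU Hnz) as [sg [d [Hsg [Hd Hphi]]]].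
  set (phi := fun t => U (m + sg * t)).
  set (dphi := fun t => sg * dU (m + sg * t)).
  assert (Hder : forall t, -d <= t <= d -> derivable_pt_lim phi t (dphi t)) by apply Hphi.
  assert (Hpos : forall t, -d <= t <= d -> 0 < dphi t) by apply Hphi.
  assert (Hphi0 : phi 0 = 0) by (unfold phi; rewrite Rmult_0_r, Rplus_0_r; exact HU0).
  assert (Hphid : phi (-d) < 0 < phi d) by (rewrite <- Hphi0;
    split; apply (increasing_of_deriv_pos phi dphi (-d) d Hder Hpos); lra).
  destruct (local_inverse phi dphi (-d) d ltac:(lra) Hder Hpos) as [g [Hgphi Hg]].
  set (Y := Rmin 1 (phi d)).
  assert (HY : 0 < Y /\ Y <= 1 /\ Y <= phi d)
    by (unfold Y; repeat split; [apply Rmin_pos; lra | apply Rmin_l | apply Rmin_r]).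
  exists Y; split; [lra|].
  exists (fun s => m + sg * g (s ^ 2)); split.
  { replace (0 ^ 2) with 0 by ring. rewrite <- Hphi0, Hgphi by lra. ring. }
  intros s Hs.
  assert (Hs2 : phi (-d) < s ^ 2 < phi d) by (split; [pose proof (pow2_ge_0 s); lra | nra]).
  destruct (Hg (s ^ 2) Hs2) as [Hgs [Hpgs Hdg]].
  assert (Hdphi_g : 0 < dphi (g (s ^ 2))) by (apply Hpos, Hgs).
  unfold dphi in Hdg, Hdphi_g.
  split; [| split; [exact Hpgs | split]].
  - replace (m + sg * g (s ^ 2) - m) with (sg * g (s ^ 2)) by ring.
    rewrite Rabs_sign_mult by exact Hsg. unfold Rabs; destruct Rcase_abs; lra.
  - intro E. rewrite E in Hdphi_g. lra.
  - apply is_derive_Reals in Hdg. auto_derive.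
    + exists (/ (sg * dU (m + sg * g (s ^ 2)))). exact Hdg.
    + change (s * (s * 1)) with (s ^ 2).
      replace (Derive (fun x => g x) (s ^ 2)) with (/ (sg * dU (m + sg * g (s ^ 2))))
        by (symmetry; apply is_derive_unique; exact Hdg).
      field. split; [intro E; rewrite E in Hdphi_g; lra | destruct Hsg as [-> | ->]; lra].
Qed.

Definition den (k s v : R) := / 2 + (3 - k - v) * s ^ 2.

Definition slope (k s v : R) := k * s * v * (2 - v) / den k s v.

Lemma Lop_den N s v vs :
  Lop N s v vs = vs * den (INR N - 2) s v - (INR N - 2) * s * v * (2 - v).
Proof. unfold Lop, den. ring. Qed.

Lemma Lop_eq0_iff N s v vs : den (INR N - 2) s v <> 0 ->
  Lop N s v vs = 0 <-> vs = slope (INR N - 2) s v.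
Proof.
  intros Hd. rewrite Lop_den. unfold slope. split; intros E.
  - apply (Rmult_eq_reg_r (den (INR N - 2) s v)); [| exact Hd].
    unfold Rdiv. rewrite Rmult_assoc, Rinv_l, Rmult_1_r by exact Hd. lra.
  - rewrite E. field. exact Hd.
Qed.

Lemma den_neq0_of_Lop_eq0 N s v vs : (N <> 2)%nat -> INR N * s ^ 2 <= / 4 -> 0 < s ->
  Lop N s v vs = 0 -> den (INR N - 2) s v <> 0.
Proof.
  intros HN Hs2 Hs HL Hden. rewrite Lop_den, Hden, Rmult_0_r, Rminus_0_l in HL.
  assert (Hk : INR N - 2 <> 0) by (apply not_INR in HN; simpl in HN; lra).
  assert (Hv : v * (2 - v) = 0).
  { apply (Rmult_eq_reg_l ((INR N - 2) * s)); [lra |].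
    apply Rmult_integral_contrapositive; split; lra. }
  unfold den in Hden. pose proof (pow2_ge_0 s).
  destruct (Rmult_integral _ _ Hv) as [-> | Hv2]; [| replace v with 2 in Hden by lra]; nra.
Qed.

Lemma den_pos_on_solution N m L W W1 W2 : (N <> 2)%nat -> 0 <= L -> INR N * L ^ 2 <= / 4 ->
  is_solution N m L W W1 W2 -> forall s, 0 <= s <= L -> 0 < den (INR N - 2) s (W s).
Proof.
  intros HN HL HNL [[HW _] [_ HLop]] s Hs.
  set (Wc := fun x => W (clamp 0 L x)).
  assert (HWc : continuity Wc)
    by (apply continuity_clamp; [exact HL | exact (has_deriv_on_cont_on _ _ _ _ HW)]).
  replace (W s) with (Wc s) by (unfold Wc; rewrite clamp_id; auto).
  apply (pos_of_nonvanishing (fun x => den (INR N - 2) x (Wc x)) L);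
    [unfold den; reg | | | exact Hs].
  - unfold den. simpl. lra.
  - intros x Hx. unfold Wc. rewrite clamp_id by lra.
    apply (den_neq0_of_Lop_eq0 N x (W x) (W1 x) HN); [| lra | apply HLop, Hx].
    assert (x ^ 2 <= L ^ 2) by (apply pow_incr; lra).
    pose proof (pos_INR N). nra.
Qed.

Definition slope_dq (k s w v : R) :=
  k * s * ((/ 2 + (3 - k) * s ^ 2) * (2 - w - v) + s ^ 2 * w * v) / (den k s w * den k s v).

Lemma slope_sub k s w v : den k s w <> 0 -> den k s v <> 0 ->
  slope k s w - slope k s v = slope_dq k s w v * (w - v).
Proof. intros Hw Hv. unfold slope, slope_dq, den in *. field; split; lra. Qed.

Lemma solution_unique N m L W W1 W2 V V1 V2 :
  (N <> 2)%nat -> 0 <= L -> INR N * L ^ 2 <= / 4 ->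
  is_solution N m L W W1 W2 -> is_solution N m L V V1 V2 ->
  forall s, 0 <= s <= L -> W s = V s.
Proof.
  intros HN HL HNL SW SV.
  pose proof (den_pos_on_solution N m L W W1 W2 HN HL HNL SW) as DW.
  pose proof (den_pos_on_solution N m L V V1 V2 HN HL HNL SV) as DV.
  destruct SW as [[HW _] [HW0 HLW]], SV as [[HV _] [HV0 HLV]].
  set (k := INR N - 2) in *.
  set (Wc := fun x => W (clamp 0 L x)). set (Vc := fun x => V (clamp 0 L x)).
  assert (HWc : continuity Wc)
    by (apply continuity_clamp; [exact HL | exact (has_deriv_on_cont_on _ _ _ _ HW)]).
  assert (HVc : continuity Vc)
    by (apply continuity_clamp; [exact HL | exact (has_deriv_on_cont_on _ _ _ _ HV)]).
  assert (EW : forall x, 0 <= x <= L -> Wc x = W x)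
    by (intros; unfold Wc; rewrite clamp_id; auto).
  assert (EV : forall x, 0 <= x <= L -> Vc x = V x)
    by (intros; unfold Vc; rewrite clamp_id; auto).
  set (lam := fun x => slope_dq k x (Wc x) (Vc x)).
  assert (Hlam : forall x, 0 <= x <= L -> continuity_pt lam x).
  { intros x Hx. unfold lam, slope_dq, den. reg.
    rewrite EW, EV by exact Hx. apply Rmult_integral_contrapositive.
    split; apply Rgt_not_eq; [apply DW | apply DV]; exact Hx. }
  destruct (continuity_ab_maj lam 0 L HL Hlam) as [xmax [Hmax _]].
  intros s Hs. rewrite <- EW, <- EV by exact Hs. apply Rminus_diag_uniq.
  apply (linear_ode_zero (fun x => Wc x - Vc x) lam L (lam xmax));
    [intros; reg | | exact Hmax | | exact Hs].
  - intros x Hx.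
    assert (Dw := DW x ltac:(lra)). assert (Dv := DV x ltac:(lra)).
    assert (HW1 : W1 x = slope k x (W x))
      by (apply (Lop_eq0_iff N); [apply Rgt_not_eq, Dw | apply HLW; lra]).
    assert (HV1 : V1 x = slope k x (V x))
      by (apply (Lop_eq0_iff N); [apply Rgt_not_eq, Dv | apply HLV; lra]).
    replace (lam x * (Wc x - Vc x)) with (W1 x - V1 x).
    + change (derivable_pt_lim (Wc - Vc)%F x (W1 x - V1 x)).
      apply derivable_pt_lim_minus; apply derivable_pt_lim_clamp; assumption.
    + unfold lam. rewrite EW, EV, HW1, HV1 by lra.
      apply slope_sub; apply Rgt_not_eq; assumption.
  - rewrite EW, EV by lra. rewrite HW0, HV0. ring.
Qed.

Definition a_coef (k v : R) := 2 * (3 - k - v) / (k * v * (2 - v)).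

Definition b_coef (k v : R) := / (k * v * (2 - v)).

(* [int_factor k v = v ^ ((3 - k) / k) * |2 - v| ^ ((k - 1) / k)], whose logarithmic derivative
   is [a_coef k v]. *)
Definition int_factor (k v : R) :=
  exp ((3 - k) / k * ln v + (k - 1) / (2 * k) * ln ((2 - v) ^ 2)).

Definition y_of (k m v : R) :=
  int_factor k v * RInt (fun w => b_coef k w / int_factor k w) m v.

Lemma int_factor_deriv k v : 0 < k -> 0 < v -> v <> 2 ->
  is_derive (int_factor k) v (a_coef k v * int_factor k v).
Proof.
  intros Hk Hv Hv2. unfold int_factor, a_coef.
  assert (0 < (2 - v) ^ 2) by (apply pow2_gt_0; lra).
  auto_derive; [repeat split; lra |].
  replace ((2 + - v) * ((2 + - v) * 1)) with ((2 - v) ^ 2) by ring.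
  field. repeat split; lra.
Qed.

Lemma b_over_int_factor_continuous k v : 0 < k -> 0 < v -> v <> 2 ->
  continuity_pt (fun w => b_coef k w / int_factor k w) v.
Proof.
  intros Hk Hv Hv2. apply continuity_pt_filterlim.
  apply (ex_derive_continuous (fun w => b_coef k w / int_factor k w)).
  unfold b_coef, int_factor.
  assert (0 < (2 - v) ^ 2) by (apply pow2_gt_0; lra).
  auto_derive. repeat split; try lra.
  - apply Rmult_integral_contrapositive; split; [apply Rmult_integral_contrapositive |]; lra.
  - apply Rgt_not_eq, exp_pos.
Qed.

Lemma y_of_deriv k m r v : 0 < k -> (forall w, Rabs (w - m) < r -> 0 < w /\ w <> 2) ->
  Rabs (v - m) < r -> is_derive (y_of k m) v (a_coef k v * y_of k m v + b_coef k v).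
Proof.
  intros Hk Hr Hv. destruct (Hr v Hv) as [Hv0 Hv2].
  assert (Hr0 : 0 < r) by (pose proof (Rabs_pos (v - m)); lra).
  assert (Hcont : forall w, m - r < w < m + r ->
                   continuity_pt (fun w => b_coef k w / int_factor k w) w).
  { intros w Hw. destruct (Hr w ltac:(unfold Rabs; destruct Rcase_abs; lra)).
    apply b_over_int_factor_continuous; assumption. }
  assert (HI : is_derive (fun v => RInt (fun w => b_coef k w / int_factor k w) m v) v
                 (b_coef k v / int_factor k v)).
  { apply (is_derive_RInt (fun w => b_coef k w / int_factor k w) _ m).
    - apply (locally_interval _ v (m - r) (m + r));
        [simpl; unfold Rabs in Hv; destruct Rcase_abs in Hv; lra ..|].
      intros y Hy1 Hy2; simpl in Hy1, Hy2.
      apply (RInt_correct (fun w => b_coef k w / int_factor k w) m y), ex_RInt_continuous.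
      intros z Hz. apply continuity_pt_filterlim, Hcont.
      unfold Rmin, Rmax in Hz; destruct Rle_dec; lra.
    - apply continuity_pt_filterlim, Hcont.
      unfold Rabs in Hv; destruct Rcase_abs in Hv; lra. }
  assert (HE : int_factor k v <> 0) by apply Rgt_not_eq, exp_pos.
  replace (a_coef k v * y_of k m v + b_coef k v)
    with (a_coef k v * int_factor k v * RInt (fun w => b_coef k w / int_factor k w) m v
          + int_factor k v * (b_coef k v / int_factor k v))
    by (unfold y_of; field; exact HE).
  exact (is_derive_mult _ _ _ _ _ (int_factor_deriv k v Hk Hv0 Hv2) HI Rmult_comm).
Qed.

Lemma y_of_id k m : y_of k m m = 0.
Proof. unfold y_of. rewrite RInt_point. apply Rmult_0_r. Qed.

Lemma y_rate_den k s v : k <> 0 -> v <> 0 -> v <> 2 ->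
  a_coef k v * s ^ 2 + b_coef k v = 2 * den k s v / (k * v * (2 - v)).
Proof. intros Hk Hv Hv2. unfold a_coef, b_coef, den. field. repeat split; lra. Qed.

Definition local_solution (k Y : R) (V : R -> R) :=
  forall s, -Y < s < Y -> den k s (V s) <> 0 /\ is_derive V s (slope k s (V s)).

Lemma exists_local_solution_ne2 k m : 0 < k -> 0 < m -> m <> 2 ->
  exists Y, 0 < Y /\ exists V, V 0 = m /\ local_solution k Y V.
Proof.
  intros Hk Hm Hm2.
  set (r := Rmin m (Rabs (2 - m)) / 2).
  assert (Hr : 0 < r) by (apply Rmult_lt_0_compat; [apply Rmin_pos, Rabs_pos_lt |]; lra).
  assert (Hrm : forall w, Rabs (w - m) < r -> 0 < w /\ w <> 2).
  { intros w Hw. pose proof (Rmin_l m (Rabs (2 - m))); pose proof (Rmin_r m (Rabs (2 - m))).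
    unfold r, Rabs in *. repeat destruct Rcase_abs; split; lra. }
  set (dU := fun v => a_coef k v * y_of k m v + b_coef k v).
  assert (Hkm : k * m * (2 - m) <> 0).
  { apply Rmult_integral_contrapositive; split; [apply Rmult_integral_contrapositive; split |];
      lra. }
  assert (HU : forall v, Rabs (v - m) < r -> is_derive (y_of k m) v (dU v))
    by (intros v Hv; exact (y_of_deriv k m r v Hk Hrm Hv)).
  assert (HdU : continuity_pt dU m).
  { assert (continuity_pt (y_of k m) m).
    { apply derivable_continuous_pt. exists (dU m). apply is_derive_Reals, HU.
      rewrite Rminus_eq_0, Rabs_R0. exact Hr. }
    unfold dU, a_coef, b_coef. reg; exact Hkm. }
  assert (HdUm : dU m = b_coef k m) by (unfold dU; rewrite y_of_id; ring).
  assert (HdU0 : dU m <> 0) by (rewrite HdUm; apply Rinv_neq_0_compat, Hkm).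
  destruct (solve_by_inversion (y_of k m) dU m r Hr HU HdU HdU0 (y_of_id k m))
    as [Y [HY [V [HV0 HV]]]].
  exists Y; split; [exact HY|]. exists V; split; [exact HV0|].
  intros s Hs. destruct (HV s Hs) as [Hvr [HyV [HdUV HVd]]].
  destruct (Hrm _ Hvr) as [Hv0 Hv2].
  assert (E : dU (V s) = 2 * den k s (V s) / (k * V s * (2 - V s)))
    by (unfold dU; rewrite HyV; apply y_rate_den; lra).
  assert (Hden : den k s (V s) <> 0) by (intro D; apply HdUV; rewrite E, D; unfold Rdiv; ring).
  split; [exact Hden|].
  replace (slope k s (V s)) with (2 * s / dU (V s)); [exact HVd|].
  rewrite E. unfold slope. field. repeat split; [exact Hden | lra ..].
Qed.

Lemma exists_local_solution k m : 0 < k -> 0 < m ->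
  exists Y, 0 < Y /\ exists V, V 0 = m /\ local_solution k Y V.
Proof.
  intros Hk Hm.
  destruct (Req_dec m 2) as [-> | Hm2]; [| apply exists_local_solution_ne2; assumption].
  set (Y := Rmin 1 (/ (2 * k))).
  assert (HY : 0 < Y /\ Y <= 1 /\ k * Y <= / 2).
  { unfold Y; repeat split; [apply Rmin_pos, Rinv_0_lt_compat; lra | apply Rmin_l |].
    replace (/ 2) with (k * / (2 * k)) by (field; lra).
    apply Rmult_le_compat_l; [lra | apply Rmin_r]. }
  exists Y; split; [lra|]. exists (fun _ => 2); split; [reflexivity|].
  intros s Hs.
  assert (Hden : 0 < den k s 2).
  { assert (Hs' : Rabs s < Y) by (unfold Rabs; destruct Rcase_abs; lra).
    unfold den. rewrite <- pow2_abs. pose proof (Rabs_pos s). nra. }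
  split; [lra|].
  replace (slope k s 2) with 0 by (unfold slope, Rdiv; ring).
  auto_derive; auto.
Qed.

Definition slope_along (k s v : R) :=
  (k * v * (2 - v) * den k s v - k * s * v * (2 - v) * (2 * (3 - k - v) * s)) / den k s v ^ 2
  + (k * s * (2 - 2 * v) * den k s v + k * s * v * (2 - v) * s ^ 2) / den k s v ^ 2
    * slope k s v.

Lemma slope_along_deriv k (V : R -> R) s :
  is_derive V s (slope k s (V s)) -> den k s (V s) <> 0 ->
  is_derive (fun s => slope k s (V s)) s (slope_along k s (V s)).
Proof.
  intros HV Hden. unfold slope_along, slope, den in *.
  auto_derive.
  - repeat split; try exact Hden; eexists; exact HV.
  - replace (Derive (fun x => V x) s) with (k * s * V s * (2 - V s) / (/ 2 + (3 - k - V s) * s ^ 2))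
      by (symmetry; apply is_derive_unique; exact HV).
    field. contradict Hden. lra.
Qed.

Lemma slope_along_continuous k (V : R -> R) s :
  continuity_pt V s -> den k s (V s) <> 0 -> continuity_pt (fun s => slope_along k s (V s)) s.
Proof. intros HV Hden. unfold slope_along, slope, den in *. reg. apply pow_nonzero, Hden. Qed.

Lemma is_solution_of_local N m Y L V : 0 < L < Y -> V 0 = m -> local_solution (INR N - 2) Y V ->
  is_solution N m L V (fun s => slope (INR N - 2) s (V s))
    (fun s => slope_along (INR N - 2) s (V s)).
Proof.
  intros HL HV0 HV.
  assert (HVs : forall s, 0 <= s <= L -> den (INR N - 2) s (V s) <> 0 /\
                 derivable_pt_lim V s (slope (INR N - 2) s (V s)))
    by (intros s Hs; destruct (HV s ltac:(lra)); split; [| apply is_derive_Reals]; assumption).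
  split; [split; [| split] | split; [exact HV0 |]].
  - apply has_deriv_on_of_derivable. intros s Hs. apply HVs, Hs.
  - apply has_deriv_on_of_derivable. intros s Hs. apply is_derive_Reals, slope_along_deriv;
      apply HV; lra.
  - apply cont_on_of_continuity. intros s Hs. apply slope_along_continuous; [| apply HVs, Hs].
    apply derivable_continuous_pt. eexists. apply HVs, Hs.
  - intros s Hs. apply Lop_eq0_iff; [apply HVs; lra | reflexivity].
Qed.

Lemma slope_along_bound k m Y V : 0 < k -> 0 < m -> 0 < Y -> V 0 = m -> local_solution k Y V ->
  exists L, 0 < L /\ forall s, 0 <= s <= L ->
    (2 - m) * slope_along k s (V s) >= k * m * (2 - m) ^ 2.
Proof.
  intros Hk Hm HY HV0 HV.
  destruct (Req_dec m 2) as [-> | Hm2].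
  { exists 1; split; [lra|]. intros s _. right; ring. }
  set (f := fun s => (2 - m) * slope_along k s (V s) - k * m * (2 - m) ^ 2).
  assert (Hf : continuity_pt f 0).
  { destruct (HV 0 ltac:(lra)) as [Hden HVd].
    assert (Hsa : continuity_pt (fun s => slope_along k s (V s)) 0).
    { apply slope_along_continuous; [| exact Hden].
      apply derivable_continuous_pt. eexists. apply is_derive_Reals, HVd. }
    apply continuity_pt_minus; [apply continuity_pt_scal, Hsa | apply continuity_pt_const].
    intros x y; reflexivity. }
  assert (Hf0 : f 0 = k * m * (2 - m) ^ 2).
  { unfold f, slope_along, slope, den. rewrite HV0. field. }
  assert (Hf0pos : 0 < f 0).
  { rewrite Hf0. apply Rmult_lt_0_compat; [nra | apply pow2_gt_0; lra]. }
  destruct (continuity_pt_pos_near f 0 Hf Hf0pos) as [d [Hd Hfd]].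
  exists (d / 2); split; [lra|]. intros s Hs.
  assert (0 < f s) by (apply Hfd; rewrite Rminus_0_r, Rabs_right; lra).
  unfold f in *. lra.
Qed.

Theorem lemma3p1 (N : nat) (HN : (3 <= N)%nat) (m : R) (Hm : 0 < m) :
  exists L : R, 0 < L /\
  exists V V1 V2 : R -> R,
    is_solution N m L V V1 V2 /\
    (forall W W1 W2 : R -> R, is_solution N m L W W1 W2 ->
       forall s, 0 <= s <= L -> W s = V s) /\
    V1 0 = 0 /\
    (forall s, 0 <= s <= L ->
       (2 - m) * V2 s >= (INR N - 2) * m * (2 - m) ^ 2).
Proof.
  assert (HN3 : 3 <= INR N) by (apply le_INR in HN; simpl in HN; lra).
  assert (Hk : 0 < INR N - 2) by lra.
  destruct (exists_local_solution (INR N - 2) m Hk Hm) as [Y [HY [V [HV0 HV]]]].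
  destruct (slope_along_bound (INR N - 2) m Y V Hk Hm HY HV0 HV) as [L1 [HL1 Hbound]].
  set (L := Rmin (Rmin (Y / 2) L1) (/ (2 * INR N))).
  assert (HLpos : 0 < L) by (repeat apply Rmin_pos; try apply Rinv_0_lt_compat; lra).
  assert (HLY : L < Y /\ L <= L1 /\ L <= / (2 * INR N)).
  { pose proof (Rmin_l (Rmin (Y / 2) L1) (/ (2 * INR N))).
    pose proof (Rmin_r (Rmin (Y / 2) L1) (/ (2 * INR N))).
    pose proof (Rmin_l (Y / 2) L1); pose proof (Rmin_r (Y / 2) L1). unfold L; lra. }
  assert (HNL : INR N * L ^ 2 <= / 4).
  { assert (2 * INR N * L <= 1).
    { replace 1 with (2 * INR N * / (2 * INR N)) by (field; lra).
      apply Rmult_le_compat_l; lra. }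
    nra. }
  exists L; split; [exact HLpos|].
  exists V, (fun s => slope (INR N - 2) s (V s)), (fun s => slope_along (INR N - 2) s (V s)).
  assert (Hsol := is_solution_of_local N m Y L V ltac:(lra) HV0 HV).
  split; [exact Hsol|]. split; [| split].
  - intros W W1 W2 HW.
    exact (solution_unique N m L _ _ _ _ _ _ ltac:(lia) ltac:(lra) HNL HW Hsol).
  - unfold slope, Rdiv. ring.
  - intros s Hs. apply Hbound. lra.
Qed.
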